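(* For the impulsive system $\dot S=S(A-S)-\beta_0 IS$, $\dot I=\beta_0 IS-(\sigma+g)I$ ($t\ne nT$), $S(nT)=(1-p)S(nT^-)$, $I(nT)=I(nT^-)$, let $$\mathcal{R}_p=\frac{\beta_0}{\sigma+g}\frac1T\int_0^T\mathcal{S}(t)\,dt,\qquad \mathcal{S}(t)=\frac{A[e^{AT}(1-p)-1]}{e^{AT}(1-p)-1+pe^{A(T-t)}}\ (0\le t<T).$$ For $p\in[0,1)$ and $T>0$: (1) $\mathcal{R}_p=\mathcal{R}_0\left[\frac{\ln(1-p)}{AT}+1\right]$; (2) if $\mathcal{R}_p=1$, then the map $F_I(y)=y\exp\left\{\beta_0\int_0^T\mathcal{S}(t)\,dt\right\}e^{-(\sigma+g)T}$ has infinitely many fixed points; (3) for $T>0$ and $p>0$, $\frac{\partial\mathcal{R}_p}{\partial T}>0$ and $\frac{\partial\mathcal{R}_p}{\partial p}<0$; (4) $\lim_{T\to+\infty}\mathcal{R}_p=\mathcal{R}_0$; (5) if $p=0$ then $\mathcal{R}_p=\mathcal{R}_0$.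
   Context: Parameters: $A\in(0,1]$, $\beta_0>0$, $\sigma,g\ge0$ with $\sigma+g>0$; $\mathcal{R}_0=A\beta_0/(\sigma+g)$. $F_I$ is the time-$T$ stroboscopic map of the Infectious variable along the disease-free periodic solution $\mathcal{S}$ (extended $T$-periodically). *)

From Stdlib Require Import Reals List.
From Coquelicot Require Import Coquelicot.
Open Scope R_scope.

Definition Sdf (A T p t : R) : R :=
  A * (exp (A * T) * (1 - p) - 1) /
  (exp (A * T) * (1 - p) - 1 + p * exp (A * (T - t))).

Definition Rzero (A beta0 sigma g : R) : R := A * beta0 / (sigma + g).

Definition Rp (A beta0 sigma g T p : R) : R :=
  beta0 / (sigma + g) * (1 / T) * RInt (fun t => Sdf A T p t) 0 T.

Definition F_I (A beta0 sigma g T p y : R) : R :=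
  y * exp (beta0 * RInt (fun t => Sdf A T p t) 0 T) * exp (- (sigma + g) * T).

(* Multiplying numerator and denominator of S(t) by e^{At} shows that S is the
   logarithmic derivative of c e^{At} + p e^{AT}, with c = e^{AT}(1-p) - 1, so
   \int_0^T S = AT + ln(1-p) and R_p = beta0/(sigma+g) (A + ln(1-p)/T).
   Every claim is then read off this closed form: it is increasing in T,
   decreasing in p, tends to R_0 as T -> +oo and equals R_0 at p = 0; and
   R_p = 1 makes the linear map F_I the identity. *)

From Stdlib Require Import Reals List Lra.
From Coquelicot Require Import Coquelicot.
Open Scope R_scope.

Lemma Sdf_denominator_pos A T p t : 0 < A -> 0 < T -> 0 <= p < 1 -> t <= T ->
  0 < exp (A * T) * (1 - p) - 1 + p * exp (A * (T - t)).
Proof.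
  intros HA HT Hp Ht.
  assert (1 < exp (A * T)) by (rewrite <- exp_0; apply exp_increasing; nra).
  assert (1 <= exp (A * (T - t))).
  { rewrite <- exp_0. destruct (Rle_lt_or_eq_dec _ _ Ht) as [Hlt | ->].
    - left. apply exp_increasing. nra.
    - right. f_equal. ring. }
  nra.
Qed.

Lemma is_derive_Sdf_primitive A T p t : 0 < A -> 0 < T -> 0 <= p < 1 -> t <= T ->
  is_derive
    (fun s => ln ((exp (A * T) * (1 - p) - 1) * exp (A * s) + p * exp (A * T)))
    t (Sdf A T p t).
Proof.
  intros HA HT Hp Ht.
  pose proof (Sdf_denominator_pos A T p t HA HT Hp Ht) as Hden.
  assert (Hfactor : (exp (A * T) * (1 - p) - 1) * exp (A * t) + p * exp (A * T)
                    = (exp (A * T) * (1 - p) - 1 + p * exp (A * (T - t))) * exp (A * t)).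
  { rewrite Rmult_plus_distr_r, Rmult_assoc, <- exp_plus.
    replace (A * (T - t) + A * t) with (A * T) by ring. reflexivity. }
  pose proof (exp_pos (A * t)).
  auto_derive; rewrite Hfactor.
  - apply Rmult_lt_0_compat; assumption.
  - unfold Sdf. field. lra.
Qed.

Lemma RInt_Sdf A T p : 0 < A -> 0 < T -> 0 <= p < 1 ->
  RInt (fun t => Sdf A T p t) 0 T = A * T + ln (1 - p).
Proof.
  intros HA HT Hp.
  set (c := exp (A * T) * (1 - p) - 1).
  set (F := fun s => ln (c * exp (A * s) + p * exp (A * T))).
  assert (HeAT : 1 < exp (A * T)) by (rewrite <- exp_0; apply exp_increasing; nra).
  assert (HFT : F T = A * T + ln (1 - p) + ln (exp (A * T) - 1)).
  { unfold F, c.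
    replace ((exp (A * T) * (1 - p) - 1) * exp (A * T) + p * exp (A * T))
      with (exp (A * T) * ((1 - p) * (exp (A * T) - 1))) by ring.
    rewrite ln_mult, ln_mult, ln_exp; try lra; try apply exp_pos; nra. }
  assert (HF0 : F 0 = ln (exp (A * T) - 1)).
  { unfold F, c. rewrite Rmult_0_r, exp_0. f_equal. ring. }
  apply is_RInt_unique.
  replace (A * T + ln (1 - p)) with (minus (F T) (F 0))
    by (rewrite HFT, HF0; unfold minus, plus, opp; simpl; ring).
  apply (is_RInt_derive F).
  - intros t Ht. rewrite Rmin_left, Rmax_right in Ht by lra.
    apply is_derive_Sdf_primitive; lra.
  - intros t Ht. rewrite Rmin_left, Rmax_right in Ht by lra.
    pose proof (Sdf_denominator_pos A T p t HA HT Hp (proj2 Ht)) as Hden.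
    apply (ex_derive_continuous (K := R_AbsRing) (V := R_NormedModule)).
    unfold Sdf. auto_derive. unfold Rminus in Hden. lra.
Qed.

Lemma Rp_closed_form A beta0 sigma g T p : 0 < A -> 0 < T -> 0 <= p < 1 ->
  Rp A beta0 sigma g T p = beta0 / (sigma + g) * (A + ln (1 - p) / T).
Proof.
  intros HA HT Hp. unfold Rp. rewrite RInt_Sdf, Rmult_assoc by lra.
  f_equal. field. lra.
Qed.

Lemma F_I_id_of_Rp_eq_1 A beta0 sigma g T p y :
  0 < A -> 0 < T -> 0 <= p < 1 -> 0 < sigma + g ->
  Rp A beta0 sigma g T p = 1 -> F_I A beta0 sigma g T p y = y.
Proof.
  intros HA HT Hp Hsg HR1.
  unfold Rp in HR1. unfold F_I. rewrite RInt_Sdf in * by lra.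
  assert (Hbal : beta0 * (A * T + ln (1 - p)) = (sigma + g) * T).
  { replace (beta0 * (A * T + ln (1 - p))) with
      (beta0 / (sigma + g) * (1 / T) * (A * T + ln (1 - p)) * ((sigma + g) * T))
      by (field; lra).
    rewrite HR1. ring. }
  rewrite Hbal, Rmult_assoc, <- exp_plus.
  replace ((sigma + g) * T + - (sigma + g) * T) with 0 by ring.
  rewrite exp_0. ring.
Qed.

Lemma list_R_nonneg_fresh (l : list R) : exists y, 0 <= y /\ ~ In y l.
Proof.
  set (y := fold_right (fun x a => Rabs x + a) 1 l).
  assert (Hy : 1 <= y /\ forall x, In x l -> x < y).
  { unfold y. clear y. induction l as [|a l [IH1 IH2]]; simpl.
    - split; [lra | tauto].
    - pose proof (Rabs_pos a). split; [lra|].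
      intros x [-> | Hx].
      + pose proof (Rle_abs x). lra.
      + pose proof (IH2 x Hx). lra. }
  exists y. split; [lra|]. intros Hin. pose proof (proj2 Hy y Hin). lra.
Qed.

Lemma is_derive_Rp_T A beta0 sigma g T p : 0 < A -> 0 < T -> 0 <= p < 1 ->
  is_derive (fun T' => Rp A beta0 sigma g T' p) T
    (beta0 / (sigma + g) * (- ln (1 - p) / (T * T))).
Proof.
  intros HA HT Hp.
  apply (is_derive_ext_loc (fun T' => beta0 / (sigma + g) * (A + ln (1 - p) / T'))).
  - apply (locally_interval _ T 0 p_infty); simpl; [lra | exact I |].
    intros T' HT' _. symmetry. apply Rp_closed_form; lra.
  - apply is_derive_scal. auto_derive; [lra | field; lra].
Qed.

Lemma is_derive_Rp_p A beta0 sigma g T p : 0 < A -> 0 < T -> 0 < p < 1 ->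
  is_derive (fun p' => Rp A beta0 sigma g T p') p
    (beta0 / (sigma + g) * (- / ((1 - p) * T))).
Proof.
  intros HA HT Hp.
  apply (is_derive_ext_loc (fun p' => beta0 / (sigma + g) * (A + ln (1 - p') / T))).
  - apply (locally_interval _ p 0 1); simpl; [lra | lra |].
    intros p' Hp0 Hp1. symmetry. apply Rp_closed_form; lra.
  - apply is_derive_scal. auto_derive; [lra | field; lra].
Qed.

Lemma is_lim_Rp_T_infty A beta0 sigma g p : 0 < A -> 0 <= p < 1 ->
  is_lim (fun T => Rp A beta0 sigma g T p) p_infty (Rzero A beta0 sigma g).
Proof.
  intros HA Hp.
  apply (is_lim_ext_loc
    (fun T => Rzero A beta0 sigma g + beta0 / (sigma + g) * ln (1 - p) * / T)).
  { exists 0. intros T HT. rewrite Rp_closed_form by lra. unfold Rzero, Rdiv. ring. }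
  assert (Hinv : is_lim (fun T => / T) p_infty 0).
  { apply (is_lim_inv (fun T => T) p_infty p_infty); [apply is_lim_id | discriminate]. }
  pose proof (is_lim_plus' _ _ p_infty _ _ (is_lim_const (Rzero A beta0 sigma g) p_infty)
    (is_lim_scal_l _ (beta0 / (sigma + g) * ln (1 - p)) p_infty 0 Hinv)) as Hlim.
  simpl in Hlim. rewrite Rmult_0_r, Rplus_0_r in Hlim. exact Hlim.
Qed.

Theorem lemma7 (A beta0 sigma g : R)
  (hA : 0 < A <= 1) (hb : 0 < beta0) (hs : 0 <= sigma) (hg : 0 <= g)
  (hsg : 0 < sigma + g) :
  (* (1) *)
  (forall T p, 0 < T -> 0 <= p < 1 ->
     Rp A beta0 sigma g T p = Rzero A beta0 sigma g * (ln (1 - p) / (A * T) + 1)) /\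
  (* (2) infinitely many fixed points (in [0,+oo)) of F_I when R_p = 1 *)
  (forall T p, 0 < T -> 0 <= p < 1 -> Rp A beta0 sigma g T p = 1 ->
     ~ (exists l : list R, forall y, 0 <= y ->
          F_I A beta0 sigma g T p y = y -> In y l)) /\
  (* (3) monotonicity via partial derivatives *)
  (forall T p, 0 < T -> 0 < p < 1 ->
     ex_derive (fun T' => Rp A beta0 sigma g T' p) T /\
     Derive (fun T' => Rp A beta0 sigma g T' p) T > 0 /\
     ex_derive (fun p' => Rp A beta0 sigma g T p') p /\
     Derive (fun p' => Rp A beta0 sigma g T p') p < 0) /\
  (* (4) *)
  (forall p, 0 <= p < 1 ->
     is_lim (fun T => Rp A beta0 sigma g T p) p_infty (Rzero A beta0 sigma g)) /\
  (* (5) *)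
  (forall T, 0 < T -> Rp A beta0 sigma g T 0 = Rzero A beta0 sigma g).
Proof.
  assert (HA : 0 < A) by lra.
  assert (Hc : 0 < beta0 / (sigma + g)) by (apply Rdiv_lt_0_compat; lra).
  split; [|split; [|split; [|split]]].
  - intros T p HT Hp. rewrite Rp_closed_form by lra. unfold Rzero. field. lra.
  - intros T p HT Hp HR1 [l Hl].
    destruct (list_R_nonneg_fresh l) as [y [Hy Hnotin]].
    apply Hnotin, Hl; [exact Hy | apply (F_I_id_of_Rp_eq_1 _ beta0); lra].
  - intros T p HT Hp.
    assert (Hln : ln (1 - p) < 0) by (rewrite <- ln_1; apply ln_increasing; lra).
    pose proof (is_derive_Rp_T A beta0 sigma g T p HA HT ltac:(lra)) as HdT.
    pose proof (is_derive_Rp_p A beta0 sigma g T p HA HT Hp) as Hdp.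
    rewrite (is_derive_unique (fun T' : R => Rp A beta0 sigma g T' p) _ _ HdT),
      (is_derive_unique (fun p' : R => Rp A beta0 sigma g T p') _ _ Hdp).
    repeat split; try (eexists; eassumption).
    + apply Rmult_lt_0_compat; [exact Hc | apply Rdiv_lt_0_compat; nra].
    + apply Rmult_pos_neg; [exact Hc |].
      apply Ropp_lt_gt_0_contravar, Rinv_0_lt_compat. nra.
  - intros p Hp. apply is_lim_Rp_T_infty; lra.
  - intros T HT. rewrite Rp_closed_form, Rminus_0_r, ln_1 by lra.
    unfold Rzero. field. lra.
Qed.
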